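(* Consider the following optimization problem over user association $\mathbf{x}=(x_{ij})$, resource allocation $\mathbf{y}=(y_{ij})$ and power $\mathbf{p}=(p_i)$, $i\in\mathcal I=\{1,\dots,I\}$, $j\in\mathcal J=\{1,\dots,J\}$: \[ \max_{\mathbf x,\mathbf y,\mathbf p}\ \sum_{j\in\mathcal J}\omega_j\log_2\Big(KB\sum_{i\in\mathcal I}y_{ij}\log_2(1+\eta_{ij})\Big) \] subject to $\eta_{ij}=\dfrac{p_i g_{ij}}{\sum_{k\in\mathcal I\setminus\{i\}}d_k p_k g_{kj}+\sigma^2}$ for all $i,j$; $\sum_{i\in\mathcal I}x_{ij}=1$ for all $j$; $d_i=\sum_{j\in\mathcal J}y_{ij}$ for all $i$; $0\le p_i\le P_i$ for all $i$; $0\le d_i\le 1$ for all $i$; $0\le y_{ij}\le x_{ij}$ and $x_{ij}\in\{0,1\}$ for all $i,j$. Let $(\mathbf x^*,\mathbf y^*,\mathbf p^* )$ be an optimal solution, let $d_i^*=\sum_{j\in\mathcal J}y^*_{ij}$, and let $\mathcal J_i=\{j\in\mathcal J: x^*_{ij}=1\}$. Then \[ y^*_{ij}=\frac{\omega_j x^*_{ij} d^*_i}{\sum_{l\in\mathcal J}\omega_l x^*_{il}}\qquad\text{for all } i\in\mathcal I,\ j\in\mathcal J_i, \] where the right-hand side is defined to be $0$ in the case $d_i^*=0$ and $x^*_{ij}=0$ for all $j\in\mathcal J$.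
   Context: Downlink heterogeneous network with $I$ base stations (BSs) and $J$ users. $x_{ij}\in\{0,1\}$ indicates that user $j$ is associated with BS $i$; $y_{ij}$ is the fraction of time-frequency resource blocks BS $i$ allocates to user $j$; $d_i$ is the load of BS $i$; $p_i$ is the per-resource-block transmit power of BS $i$ with maximum $P_i>0$. The constants $K>0$ (number of resource blocks), $B>0$ (bandwidth per block), channel gains $g_{ij}>0$, noise power $\sigma^2>0$ and user priorities $\omega_j>0$ are given. $\eta_{ij}$ is the (load-coupled) average SINR of user $j$ served by BS $i$. *)

From HB Require Import structures.
From mathcomp Require Import all_boot all_order all_algebra.
From mathcomp Require Import all_classical all_reals.
From mathcomp Require Import ereal exp.
Set Implicit Arguments. Unset Strict Implicit. Unset Printing Implicit Defensive.
Import Order.TTheory GRing.Theory Num.Theory.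
Local Open Scope ring_scope.

Section HetNet.
Variable R : realType.
Variables nI nJ : nat.

Definition log2 (r : R) : R := ln r / ln 2.

Definition elog2 (r : R) : \bar R := if 0 < r then (log2 r)%:E else -oo%E.

Definition load (y : 'I_nI -> 'I_nJ -> R) (i : 'I_nI) : R := \sum_(j < nJ) y i j.

Definition sinr (g : 'I_nI -> 'I_nJ -> R) (sigma2 : R)
  (y : 'I_nI -> 'I_nJ -> R) (p : 'I_nI -> R) (i : 'I_nI) (j : 'I_nJ) : R :=
  p i * g i j / (\sum_(k < nI | k != i) load y k * p k * g k j + sigma2).

Definition rate (K B : R) (g : 'I_nI -> 'I_nJ -> R) (sigma2 : R)
  (y : 'I_nI -> 'I_nJ -> R) (p : 'I_nI -> R) (j : 'I_nJ) : R :=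
  K * B * \sum_(i < nI) y i j * log2 (1 + sinr g sigma2 y p i j).

Definition objective (K B : R) (g : 'I_nI -> 'I_nJ -> R) (sigma2 : R)
  (w : 'I_nJ -> R) (x y : 'I_nI -> 'I_nJ -> R) (p : 'I_nI -> R) : \bar R :=
  (\sum_(j < nJ) (w j)%:E * elog2 (rate K B g sigma2 y p j))%E.

Definition feasible (Pmax : 'I_nI -> R)
  (x y : 'I_nI -> 'I_nJ -> R) (p : 'I_nI -> R) : Prop :=
  [/\ (forall j, \sum_(i < nI) x i j = 1),
      (forall i, 0 <= p i <= Pmax i),
      (forall i, 0 <= load y i <= 1),
      (forall i j, 0 <= y i j <= x i j) &
      (forall i j, x i j = 0 \/ x i j = 1)].

Definition optimal (K B : R) (g : 'I_nI -> 'I_nJ -> R) (sigma2 : R)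
  (w : 'I_nJ -> R) (Pmax : 'I_nI -> R)
  (x y : 'I_nI -> 'I_nJ -> R) (p : 'I_nI -> R) : Prop :=
  feasible Pmax x y p /\
  forall x' y' p', feasible Pmax x' y' p' ->
    (objective K B g sigma2 w x' y' p' <= objective K B g sigma2 w x y p)%E.

End HetNet.

From Pilot Require Import Defs.
From HB Require Import structures.
From mathcomp Require Import all_boot all_order all_algebra.
From mathcomp Require Import all_classical all_reals.
From mathcomp Require Import ereal exp.
From mathcomp Require Import ring lra.
Set Implicit Arguments. Unset Strict Implicit. Unset Printing Implicit Defensive.
Import Order.TTheory GRing.Theory Num.Theory.
Local Open Scope ring_scope.

(* Replacing the allocation row of a station i by the proportional share
   y'_ij = w_j x_ij d_i / W_i, where W_i = sum_l w_l x_il, leaves every load and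
   hence every SINR unchanged.  So the rate of each user j served by i is
   multiplied by y'_ij / y_ij, the other rates do not move, and the objective
   changes by (1 / ln 2) sum_(j in J_i) w_j ln (y'_ij / y_ij), which is <= 0 at an
   optimum.  On J_i we have w_j = (W_i / d_i) y'_ij, so this sum is a positive
   multiple of the relative entropy of y'_i. with respect to y_i., and both rows
   have total d_i over J_i; by Gibbs' inequality they coincide.  The logarithms
   are finite because an optimum has positive rates: the point where one station
   serves all users in equal shares already has a finite objective. *)

Lemma ln_lt_subr1 (R : realType) (u : R) : 0 < u -> u != 1 -> ln u < u - 1.
Proof.
move=> u_gt0 u_neq1; have lnu_neq0 : ln u != 0 by rewrite ln_eq0.
by have := expR_gt1Dx lnu_neq0; rewrite lnK ?posrE // => ?; lra.
Qed.

Lemma ln_le_subr1 (R : realType) (u : R) : 0 < u -> ln u <= u - 1.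
Proof.
move=> u_gt0; have [->|u_neq1] := eqVneq u 1; first by rewrite ln1 subrr.
exact/ltW/ln_lt_subr1.
Qed.

Section RelativeEntropy.
Variables (R : realType) (I : finType) (P : pred I) (p q : I -> R).
Hypotheses (p_gt0 : forall j, P j -> 0 < p j) (q_gt0 : forall j, P j -> 0 < q j).

Lemma relative_entropy_le0_eq :
  \sum_(j | P j) q j = \sum_(j | P j) p j ->
  \sum_(j | P j) p j * ln (p j / q j) <= 0 -> forall j, P j -> q j = p j.
Proof.
move=> sum_q entropy_le0.
(* Each gap is ln u <= u - 1 at u = q j / p j, and the gaps add up to the entropy. *)
pose gap j := p j * (q j / p j - 1 - ln (q j / p j)).
have gap_ge0 j : P j -> 0 <= gap j.
  move=> Pj; rewrite /gap mulr_ge0 ?(ltW (p_gt0 Pj)) // subr_ge0.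
  by rewrite ln_le_subr1 // divr_gt0 ?p_gt0 ?q_gt0.
have gapE j : P j -> gap j = q j - p j + p j * ln (p j / q j).
  move=> Pj; have [pj_gt0 qj_gt0] := (p_gt0 Pj, q_gt0 Pj).
  rewrite /gap -invf_div lnV ?posrE ?divr_gt0 //.
  by field; rewrite !gt_eqF.
have sum_gap : \sum_(j | P j) gap j = 0.
  apply/eqP; rewrite eq_le sumr_ge0 // andbT (eq_bigr _ gapE) big_split /=.
  by rewrite sumrB sum_q subrr add0r.
move=> j Pj; have := psumr_eq0P gap_ge0 sum_gap Pj.
move/eqP; rewrite mulf_eq0 gt_eqF ?p_gt0 //= subr_eq0 => /eqP ln_eq.
have [u1|u_neq1] := eqVneq (q j / p j) 1.
  by rewrite -[q j](divfK (lt0r_neq0 (p_gt0 Pj))) u1 mul1r.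
by have := ln_lt_subr1 (divr_gt0 (q_gt0 Pj) (p_gt0 Pj)) u_neq1; rewrite -ln_eq ltxx.
Qed.

End RelativeEntropy.

Lemma log2_gt0 (R : realType) (r : R) : 1 < r -> 0 < log2 r.
Proof. by move=> r_gt1; rewrite divr_gt0 ?ln_gt0 // ltr1n. Qed.

Section Network.
Variables (R : realType) (nI nJ : nat) (K B sigma2 : R).
Variables (g : 'I_nI -> 'I_nJ -> R) (w : 'I_nJ -> R) (Pmax : 'I_nI -> R).
Hypotheses (K_gt0 : 0 < K) (B_gt0 : 0 < B) (sigma2_gt0 : 0 < sigma2).
Hypotheses (g_gt0 : forall i j, 0 < g i j) (w_gt0 : forall j, 0 < w j).
Hypothesis Pmax_gt0 : forall i, 0 < Pmax i.

Local Notation sinr := (sinr g sigma2).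
Local Notation rate := (rate K B g sigma2).
Local Notation objective := (objective K B g sigma2 w).
Local Notation feasible := (feasible Pmax).
Local Notation optimal := (optimal K B g sigma2 w Pmax).

Implicit Types (x y : 'I_nI -> 'I_nJ -> R) (p : 'I_nI -> R).

Lemma sinr_gt0 y p i j : (forall k, 0 <= load y k) -> (forall k, 0 <= p k) ->
  0 < p i -> 0 < sinr y p i j.
Proof.
move=> load_ge0 p_ge0 pi_gt0; rewrite divr_gt0 ?mulr_gt0 //.
by rewrite ltr_wpDl // sumr_ge0 // => k _; rewrite !mulr_ge0 // ltW.
Qed.

Lemma sinr_eq_load y y' p : load y =1 load y' -> sinr y p =2 sinr y' p.
Proof. by move=> load_eq i j; rewrite /Defs.sinr; under eq_bigr do rewrite load_eq. Qed.

Lemma rate_single_server y p i j : (forall k, k != i -> y k j = 0) ->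
  rate y p j = K * B * (y i j * log2 (1 + sinr y p i j)).
Proof.
move=> y_off; rewrite /Defs.rate (bigD1 i) //= big1 ?addr0 // => k /y_off ->.
by rewrite mul0r.
Qed.

Lemma feasible_assoc_ge0 x y p i j : feasible x y p -> 0 <= x i j.
Proof. by case=> _ _ _ _ /(_ i j) [] ->; rewrite ?ler01. Qed.

Lemma feasible_alloc_ge0 x y p i j : feasible x y p -> 0 <= y i j.
Proof. by case=> _ _ _ /(_ i j) /andP[]. Qed.

Lemma feasible_alloc_unserved x y p i j : feasible x y p -> x i j = 0 -> y i j = 0.
Proof.
case=> _ _ _ /(_ i j) /andP[y_ge0 y_le] _ x0.
by apply/eqP; rewrite eq_le y_ge0 -x0 y_le.
Qed.

Lemma feasible_server_unique x y p i k j : feasible x y p ->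
  x i j = 1 -> k != i -> x k j = 0.
Proof.
move=> feas xij1 ki; have [assoc_sum _ _ _ _] := feas.
have := assoc_sum j; rewrite (bigD1 i) //= xij1 => /(congr1 (fun s => s - 1)).
rewrite addrC addrK subrr => /psumr_eq0P; apply=> // l _.
exact: feasible_assoc_ge0 feas.
Qed.

Lemma objective_EFin x y p : (forall j, 0 < rate y p j) ->
  objective x y p = (\sum_j w j * log2 (rate y p j))%:E.
Proof.
move=> rate_gt0; rewrite /Defs.objective -sumEFin; apply: eq_bigr => j _.
by rewrite /elog2 rate_gt0 -EFinM.
Qed.

Lemma objective_Ny x y p j : rate y p j <= 0 -> objective x y p = -oo%E.
Proof.
move=> rate_le0; rewrite /Defs.objective (bigD1 j) //= /elog2 ltNge rate_le0 /=.
by rewrite mulrNy gtr0_sg ?w_gt0 // mul1e addNye.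
Qed.

Lemma exists_feasible_rate_gt0 (i0 : 'I_nI) : (0 < nJ)%N ->
  exists x y p, feasible x y p /\ forall j, 0 < rate y p j.
Proof.
move=> nJ_gt0; have nJ_neq0 : nJ%:R != 0 :> R by rewrite pnatr_eq0 -lt0n.
pose x i (_ : 'I_nJ) : R := (i == i0)%:R.
pose y i j := x i j / nJ%:R.
have load_y i : load y i = (i == i0)%:R.
  by rewrite /load /y /x sumr_const card_ord -[_ *+ nJ]mulr_natr divfK.
have load_ge0 i : 0 <= load y i by rewrite load_y ler0n.
exists x, y, Pmax; split; first split.
- move=> j; rewrite (bigD1 i0) //= big1 => [|i /negbTE]; rewrite /x ?eqxx ?addr0 //.
  by move=> ->.
- by move=> i; rewrite ltW ?lexx.
- by move=> i; rewrite load_ge0 load_y lern1 leq_b1.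
- move=> i j; rewrite /y /x; case: (i == i0); rewrite ?mul0r ?lexx //.
  by rewrite mul1r invr_ge0 ler0n invf_le1 ?ler1n ?ltr0n.
- by move=> i j; rewrite /x; case: (i == i0); [right|left].
move=> j; rewrite (@rate_single_server _ _ i0) => [|k]; last first.
  by rewrite /y /x => /negbTE ->; rewrite mul0r.
have y_gt0 : 0 < y i0 j by rewrite /y /x eqxx mul1r invr_gt0 ltr0n.
have sinr_pos : 0 < sinr y Pmax i0 j by apply: sinr_gt0 => // k; exact: ltW.
apply: mulr_gt0; first exact: mulr_gt0.
by apply: mulr_gt0 => //; apply: log2_gt0; rewrite ltrDl.
Qed.

Lemma feasible_server_exists x y p j : feasible x y p -> exists i, x i j = 1.
Proof.
move=> feas; have [assoc_sum _ _ _ x01] := feas.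
have : \sum_i x i j != 0 by rewrite assoc_sum oner_neq0.
move/eqP/(psumr_neq0P (fun i _ => feasible_assoc_ge0 i j feas)) => [i /andP[_ xij_gt0]].
by exists i; case: (x01 i j) xij_gt0 => // ->; rewrite ltxx.
Qed.

Lemma optimal_rate_gt0 x y p : optimal x y p -> forall j, 0 < rate y p j.
Proof.
move=> [feas opt_ge] j; rewrite ltNge; apply/negP => /(objective_Ny x) obj_Ny.
have [i0 _] := feasible_server_exists j feas.
have nJ_gt0 : (0 < nJ)%N := leq_ltn_trans (leq0n j) (ltn_ord j).
have [x' [y' [p' [feas' rate'_gt0]]]] := exists_feasible_rate_gt0 i0 nJ_gt0.
by have := opt_ge _ _ _ feas'; rewrite obj_Ny objective_EFin // leeNy_eq.
Qed.

Lemma alloc_le_load x y p i j : feasible x y p -> y i j <= load y i.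
Proof.
move=> feas; rewrite /load (bigD1 j) //= lerDl sumr_ge0 // => l _.
exact: feasible_alloc_ge0 feas.
Qed.

Lemma served_alloc_gt0 x y p i j : feasible x y p -> x i j = 1 ->
  0 < rate y p j -> 0 < y i j.
Proof.
move=> feas xij1; rewrite (@rate_single_server _ _ i) => [|k ki]; last first.
  exact: feasible_alloc_unserved feas (feasible_server_unique feas xij1 ki).
move=> rate_gt0; rewrite lt0r (feasible_alloc_ge0 i j feas) andbT.
by apply: contraTneq rate_gt0 => ->; rewrite mul0r mulr0 ltxx.
Qed.

Lemma optimal_alloc_gt0 x y p i j : optimal x y p -> x i j = 1 -> 0 < y i j.
Proof.
move=> opt xij1; have [feas _] := opt.
exact: served_alloc_gt0 feas xij1 (optimal_rate_gt0 opt j).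
Qed.

Lemma optimal_load_gt0 x y p i j : optimal x y p -> x i j = 1 -> 0 < load y i.
Proof.
move=> opt xij1; have [feas _] := opt.
exact: lt_le_trans (optimal_alloc_gt0 opt xij1) (alloc_le_load i j feas).
Qed.

Lemma big_served x y p i (f : 'I_nJ -> R) : feasible x y p ->
  (forall j, x i j = 0 -> f j = 0) -> \sum_j f j = \sum_(j | x i j == 1) f j.
Proof.
move=> [_ _ _ _ x01] f0; rewrite (bigID (fun j => x i j == 1)) /= addrC big1 ?add0r //.
by move=> j; case: (x01 i j) => [/f0 -> //|->]; rewrite eqxx.
Qed.

Lemma sum_alloc_served x y p i : feasible x y p ->
  \sum_(j | x i j == 1) y i j = load y i.
Proof.
move=> feas; rewrite /load (big_served (i := i) feas) // => j.
exact: feasible_alloc_unserved feas.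
Qed.

Lemma served_weight_gt0 x y p i j : feasible x y p -> x i j = 1 ->
  0 < \sum_l w l * x i l.
Proof.
move=> feas xij1; rewrite (bigD1 j) //= xij1 mulr1 ltr_pwDl ?w_gt0 //.
rewrite sumr_ge0 // => l _.
by rewrite mulr_ge0 ?(feasible_assoc_ge0 i l feas) // ltW.
Qed.

Definition proportional_alloc x y i0 : 'I_nI -> 'I_nJ -> R := fun i j =>
  if i == i0 then w j * x i0 j * load y i0 / \sum_l w l * x i0 l else y i j.

Section ProportionalAlloc.
Variables (x y : 'I_nI -> 'I_nJ -> R) (p : 'I_nI -> R) (i0 : 'I_nI).
Hypothesis feas : feasible x y p.
Hypothesis weight_gt0 : 0 < \sum_l w l * x i0 l.

Local Notation y' := (proportional_alloc x y i0).

Lemma load_proportional_alloc : load y' =1 load y.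
Proof.
move=> i; rewrite /load /proportional_alloc; case: eqP => [->|_] //.
by rewrite -!mulr_suml mulrAC divff ?mul1r // gt_eqF.
Qed.

Lemma feasible_proportional_alloc : feasible x y' p.
Proof.
have [assoc_sum p_range load_range y_range x01] := feas.
split=> // [i|i j]; first by rewrite load_proportional_alloc.
rewrite /proportional_alloc; case: eqP => [->|_]; last exact: y_range.
have /andP[d_ge0 d_le1] := load_range i0.
have x_ge0 := feasible_assoc_ge0 i0 j feas.
rewrite divr_ge0 ?mulr_ge0 ?(ltW (w_gt0 j)) ?(ltW weight_gt0) //=.
rewrite ler_pdivrMr //.
have wj_le : w j * x i0 j <= \sum_l w l * x i0 l.
  rewrite (bigD1 j) //= lerDl sumr_ge0 // => l _.
  by rewrite mulr_ge0 ?(feasible_assoc_ge0 i0 l feas) // ltW.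
case: (x01 i0 j) wj_le => ->; first by rewrite mulr0 !mul0r.
rewrite !mulr1 mul1r => wj_le; apply: le_trans wj_le.
by rewrite ger_pMr ?w_gt0.
Qed.

Lemma rate_proportional_alloc_unserved j : x i0 j = 0 -> rate y' p j = rate y p j.
Proof.
move=> x0; rewrite /Defs.rate; congr (_ * _); apply: eq_bigr => i _.
rewrite -(sinr_eq_load _ load_proportional_alloc) /proportional_alloc.
by case: eqP => [->|_] //; rewrite x0 (feasible_alloc_unserved feas x0) mulr0 !mul0r.
Qed.

Lemma rate_proportional_alloc_served j : x i0 j = 1 ->
  rate y' p j * y i0 j = rate y p j * y' i0 j.
Proof.
move=> x1; have y_off k : k != i0 -> y k j = 0.
  by move=> ki; apply: feasible_alloc_unserved feas (feasible_server_unique feas x1 ki).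
rewrite (@rate_single_server _ _ i0) ?(@rate_single_server y _ i0) //.
  by rewrite (sinr_eq_load _ load_proportional_alloc); ring.
by move=> k ki; rewrite /proportional_alloc (negbTE ki) y_off.
Qed.

Lemma proportional_alloc_gt0 j : 0 < load y i0 -> x i0 j = 1 -> 0 < y' i0 j.
Proof.
by move=> load_gt0 xj; rewrite /proportional_alloc eqxx xj mulr1 !divr_gt0 ?mulr_gt0.
Qed.

Lemma sum_proportional_alloc_served : \sum_(j | x i0 j == 1) y' i0 j = load y i0.
Proof.
rewrite -load_proportional_alloc /load (big_served (i := i0) feas) // => j x0.
by rewrite /proportional_alloc eqxx x0 mulr0 !mul0r.
Qed.

End ProportionalAlloc.

Lemma optimal_proportional_gain_le0 x y p i0 j0 : optimal x y p -> x i0 j0 = 1 ->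
  \sum_(j | x i0 j == 1) w j * ln (proportional_alloc x y i0 i0 j / y i0 j) <= 0.
Proof.
move=> opt xij1; have [feas opt_ge] := opt; have [_ _ _ _ x01] := feas.
have weight_gt0 := served_weight_gt0 feas xij1.
have rate_gt0 := optimal_rate_gt0 opt.
have y_gt0 j : x i0 j = 1 -> 0 < y i0 j := optimal_alloc_gt0 opt.
have load_gt0 := optimal_load_gt0 opt xij1.
set y' := proportional_alloc x y i0.
pose t j := if x i0 j == 1 then y' i0 j / y i0 j else 1.
have t_gt0 j : 0 < t j.
  rewrite /t; case: ifP => // /eqP xj.
  by rewrite divr_gt0 ?y_gt0 ?proportional_alloc_gt0.
(* Loads, hence SINRs, are unchanged: only the rates of users served by i0 move. *)
have rate'E j : rate y' p j = rate y p j * t j.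
  rewrite /t; case: eqP => xj; last first.
    have x0 : x i0 j = 0 by case: (x01 i0 j).
    by rewrite mulr1 rate_proportional_alloc_unserved.
  rewrite mulrA -(rate_proportional_alloc_served feas weight_gt0 xj) mulfK //.
  exact/lt0r_neq0/y_gt0.
have := opt_ge _ _ _ (feasible_proportional_alloc feas weight_gt0).
rewrite !objective_EFin // => [|j]; last by rewrite rate'E mulr_gt0.
rewrite lee_fin -subr_ge0 -sumrB.
have ln2_gt0 : 0 < ln (2 : R) by rewrite ln_gt0 // ltr1n.
have gainE j : w j * log2 (rate y p j) - w j * log2 (rate y' p j) =
    - (w j * ln (t j)) / ln 2.
  by rewrite rate'E /log2 lnM ?posrE //; field; rewrite gt_eqF.
under eq_bigr do rewrite gainE.
rewrite -mulr_suml sumrN pmulr_lge0 ?invr_gt0 // oppr_ge0.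
rewrite (big_served (i := i0) feas) => [|j x0]; last first.
  by rewrite /t x0 eq_sym oner_eq0 ln1 mulr0.
by under eq_bigr => j xj do rewrite /t xj /=.
Qed.

Lemma optimal_alloc_proportional x y p i j : optimal x y p -> x i j = 1 ->
  y i j = proportional_alloc x y i i j.
Proof.
move=> opt xij1; have [feas _] := opt.
have weight_gt0 := served_weight_gt0 feas xij1.
have y_gt0 l : x i l == 1 -> 0 < y i l by move=> /eqP; apply: optimal_alloc_gt0 opt.
have load_gt0 := optimal_load_gt0 opt xij1.
have y'_gt0 l : x i l == 1 -> 0 < proportional_alloc x y i i l.
  by move=> /eqP xl; apply: proportional_alloc_gt0.
apply: (relative_entropy_le0_eq y'_gt0 y_gt0); last exact/eqP.
  by rewrite (sum_alloc_served i feas) (sum_proportional_alloc_served feas weight_gt0).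
have share_gt0 : 0 < load y i / \sum_l w l * x i l by rewrite divr_gt0.
have -> : \sum_(l | x i l == 1) proportional_alloc x y i i l *
             ln (proportional_alloc x y i i l / y i l) =
           load y i / (\sum_l w l * x i l) *
             \sum_(l | x i l == 1) w l * ln (proportional_alloc x y i i l / y i l).
  rewrite mulr_sumr; apply: eq_bigr => l /eqP xl.
  by rewrite {1}/proportional_alloc eqxx xl mulr1; ring.
by rewrite pmulr_rle0 //; apply: optimal_proportional_gain_le0 opt xij1.
Qed.

End Network.

Theorem theorem1 (R : realType) (nI nJ : nat) (K B sigma2 : R)
  (g : 'I_nI -> 'I_nJ -> R) (w : 'I_nJ -> R) (Pmax : 'I_nI -> R)
  (hK : 0 < K) (hB : 0 < B) (hs : 0 < sigma2)
  (hg : forall i j, 0 < g i j) (hw : forall j, 0 < w j)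
  (hP : forall i, 0 < Pmax i)
  (x y : 'I_nI -> 'I_nJ -> R) (p : 'I_nI -> R) :
  optimal K B g sigma2 w Pmax x y p ->
  forall (i : 'I_nI) (j : 'I_nJ), x i j = 1 ->
    y i j = w j * x i j * load y i / \sum_(l < nJ) w l * x i l.
Proof.
move=> opt i j xij1.
rewrite {1}(optimal_alloc_proportional hK hB hs hg hw hP opt xij1).
by rewrite /proportional_alloc eqxx.
Qed.
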